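(* Let $\mathcal{K}$ be a set of compact, orthogonally convex subsets of $\mathbb{R}^n$ that contains every singleton $\{x\}$ and satisfies $X+I\in\mathcal{K}$ whenever $X\in\mathcal{K}$ and $I$ is a compact interval. Then every monotone translation-invariant valuation on $\mathcal{K}$ is continuous with respect to the Hausdorff metric.
   Context: A subset $X\subseteq\mathbb{R}^n$ is orthogonally convex if $X\cap L$ is convex for every straight line $L$ parallel to a coordinate axis. An interval in $\mathbb{R}^n$ is a product of intervals in $\mathbb{R}$; $+$ is Minkowski sum. A valuation on $\mathcal{K}$ is a function $\phi\colon\mathcal{K}\to\mathbb{R}$ with $\phi(\emptyset)=0$ and $\phi(X\cup Y)=\phi(X)+\phi(Y)-\phi(X\cap Y)$ whenever $X,Y,X\cup Y,X\cap Y\in\mathcal{K}$. It is increasing if $X\subseteq Y$ implies $\phi(X)\le\phi(Y)$, monotone if $\phi$ or $-\phi$ is increasing, and translation-invariant if $\phi(X+a)=\phi(X)$ for all $X\in\mathcal{K}$, $a\in\mathbb{R}^n$. The Hausdorff distance between compact $X,Y$ is $\inf\{\delta>0: X\subseteq Y+\delta B_n,\ Y\subseteq X+\delta B_n\}$ with $B_n$ the closed unit ball of the $\ell_1$ norm (any norm gives the same notion of continuity). *)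

From HB Require Import structures.
From mathcomp Require Import all_boot all_order all_algebra.
From mathcomp Require Import all_classical all_reals all_analysis.
Set Implicit Arguments. Unset Strict Implicit. Unset Printing Implicit Defensive.
Import Order.TTheory GRing.Theory Num.Theory.
Import numFieldNormedType.Exports.
Local Open Scope classical_set_scope.
Local Open Scope ring_scope.

Section Defs.
Variables (R : realType) (n : nat).
Local Notation V := 'rV[R]_n.

Definition mink_sum (X Y : set V) : set V :=
  [set z | exists x y, X x /\ Y y /\ z = x + y].

Definition sscale (d : R) (X : set V) : set V := [set d *: x | x in X].

Definition l1_ball : set V := [set x | \sum_(i < n) `|x ord0 i| <= 1].

(* Hausdorff distance (extended real; +oo if no delta works) *)
Definition hausdorff_dist (X Y : set V) : \bar R :=
  ereal_inf [set d%:E | d in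
    [set d : R | 0 < d /\ X `<=` mink_sum Y (sscale d l1_ball)
                       /\ Y `<=` mink_sum X (sscale d l1_ball)]].

Definition convex_set (S : set V) : Prop :=
  forall x y, S x -> S y -> forall t : R, 0 <= t <= 1 ->
    S ((1 - t) *: x + t *: y).

Definition unitv (i : 'I_n) : V := \row_(j < n) (if j == i then 1 else 0).

Definition axis_line (a : V) (i : 'I_n) : set V := [set a + t *: unitv i | t in [set: R]].

Definition orth_convex (X : set V) : Prop :=
  forall a i, convex_set (X `&` axis_line a i).

Definition compact_interval (I : set V) : Prop :=
  exists a b : V, (forall i, a ord0 i <= b ord0 i) /\
    I = [set x | forall i, a ord0 i <= x ord0 i <= b ord0 i].

Definition is_valuation (K : set (set V)) (phi : set V -> R) : Prop :=
  (K set0 -> phi set0 = 0) /\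
  (forall X Y, K X -> K Y -> K (X `|` Y) -> K (X `&` Y) ->
     phi (X `|` Y) = phi X + phi Y - phi (X `&` Y)).

Definition increasing_on (K : set (set V)) (phi : set V -> R) : Prop :=
  forall X Y, K X -> K Y -> X `<=` Y -> phi X <= phi Y.

Definition monotone_on (K : set (set V)) (phi : set V -> R) : Prop :=
  increasing_on K phi \/ increasing_on K (fun X => - phi X).

Definition translation_invariant (K : set (set V)) (phi : set V -> R) : Prop :=
  forall X a, K X -> phi (mink_sum X [set a]) = phi X.

Definition hausdorff_continuous (K : set (set V)) (phi : set V -> R) : Prop :=
  forall X, K X -> forall e : R, 0 < e -> exists2 d : R, 0 < d &
    forall Y, K Y -> (hausdorff_dist X Y < d%:E)%E -> `|phi X - phi Y| < e.

End Defs.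

From HB Require Import structures.
From mathcomp Require Import all_boot all_order all_algebra.
From mathcomp Require Import all_classical all_reals all_analysis.
From mathcomp Require Import ring lra.
Import Order.TTheory GRing.Theory Num.Theory.
Import numFieldNormedType.Exports.
Local Open Scope classical_set_scope.
Local Open Scope ring_scope.
Set Implicit Arguments. Unset Strict Implicit.

(* For [Z] in [K] and an axis [i], the map [r |-> phi (Z + [0, r] e_i) - phi Z]
   is additive on [r >= 0]: the valuation identity applies to two adjacent
   prisms, which meet in a translate of [Z] by orthogonal convexity.  So the
   increment along a segment of length [1/m] is [1/m] of the increment along a
   unit segment, and the latter is bounded by monotonicity uniformly for sets
   near a fixed [X].  Adding the cube [[0, 1/m]^n] one axis at a time thus
   raises [phi] by at most [C/m].  If [Y] is within [1/(2m)] of [X] in the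
   Hausdorff metric, a translate of [X] lies in [Y + [0, 1/m]^n] and
   vice versa, whence [|phi X - phi Y| <= C/m].  Decreasing valuations are
   handled through [-phi]. *)

Section Geometry.
Variables (R : realType) (n : nat).
Local Notation V := 'rV[R]_n.
Local Notation e := (@unitv R n).

Definition box (a b : V) : set V :=
  [set x | forall j, a ord0 j <= x ord0 j <= b ord0 j].

Definition axis_segment (i : 'I_n) (a b : R) : set V :=
  [set r *: e i | r in [set r : R | a <= r <= b]].

Definition prism (Z : set V) (i : 'I_n) (r : R) : set V :=
  mink_sum Z (axis_segment i 0 r).

Lemma compact_interval_box (a b : V) :
  (forall j, a ord0 j <= b ord0 j) -> compact_interval (box a b).
Proof. by move=> ab; exists a, b. Qed.

Lemma compact_interval_set1 (a : V) : compact_interval [set a].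
Proof.
have -> : [set a] = box a a.
  apply/seteqP; split=> x /=; first by move=> -> j; rewrite lexx.
  by move=> xa; apply/rowP=> j; apply/eqP; rewrite eq_le andbC.
by apply: compact_interval_box.
Qed.

Lemma compact_interval_axis_segment i a b :
  a <= b -> compact_interval (axis_segment i a b).
Proof.
move=> ab; exists (a *: e i), (b *: e i); split.
  by move=> j; rewrite !mxE; case: (j == i); rewrite ?mulr1 ?mulr0.
apply/seteqP; split=> x /=.
  case=> r /= /andP[ar rb] <- j; rewrite !mxE.
  by case: (j == i); rewrite ?mulr1 ?mulr0 ?lexx // ar rb.
move=> hx; exists (x ord0 i); first by move: (hx i); rewrite !mxE eqxx !mulr1.
apply/rowP=> j; rewrite !mxE; have [->|ji] := eqVneq j i; first by rewrite mulr1.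
by move: (hx j); rewrite !mxE (negbTE ji) !mulr0 => /andP[? ?]; lra.
Qed.

Lemma mink_sum_set1P (Z : set V) (a z : V) : mink_sum Z [set a] z <-> Z (z - a).
Proof.
split; first by case=> x [y [Zx [-> ->]]]; rewrite addrK.
by move=> Zza; exists (z - a), a; rewrite subrK.
Qed.

Lemma prismU (Z : set V) i s t : 0 <= s -> 0 <= t ->
  prism Z i s `|` mink_sum Z (axis_segment i s (s + t)) = prism Z i (s + t).
Proof.
move=> s0 t0; apply/seteqP; split=> z.
  by case=> -[x [_ [Zx [[r /andP[r1 r2] <-] ->]]]];
    exists x, (r *: e i); do !split=> //; exists r => //=; apply/andP; split; lra.
case=> x [_ [Zx [[r /andP[r1 r2] <-] ->]]].
have [rs|sr] := lerP r s; [left | right]; exists x, (r *: e i); do !split=> //.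
  by exists r; rewrite //= r1 rs.
by exists r => //=; apply/andP; split; lra.
Qed.

(* Orthogonal convexity makes the two prisms meet in a translate of [Z]: a
   common point comes from two points of [Z] on one axis line, and the point
   of [Z] we need lies between them. *)
Lemma prismI (Z : set V) i s t : orth_convex Z -> 0 <= s -> 0 <= t ->
  prism Z i s `&` mink_sum Z (axis_segment i s (s + t))
  = mink_sum Z [set s *: e i].
Proof.
move=> ocZ s0 t0; apply/seteqP; split=> z; last first.
  move=> /mink_sum_set1P Zz; split;
    exists (z - s *: e i), (s *: e i); rewrite subrK; do !split=> //;
    by exists s => //=; apply/andP; split; lra.
case=> -[x [_ [Zx [[a /andP[a1 a2] <-] ->]]]]
        [x' [_ [Zx' [[b /andP[b1 b2] <-] xab]]]].
apply/mink_sum_set1P.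
have x'E : x' = x + (a - b) *: e i.
  by apply/rowP=> j; move/rowP/(_ j): xab; rewrite !mxE => ?; lra.
rewrite {}x'E in Zx'.
have -> : x + a *: e i - s *: e i = x + (a - s) *: e i.
  by apply/rowP=> j; rewrite !mxE; lra.
have [ab|ab] := eqVneq a b.
  have -> : a - s = 0 by lra.
  by rewrite scale0r addr0.
have ba : 0 < b - a by rewrite subr_gt0 lt_neqAle ab /=; lra.
have line_x : axis_line x i x by exists 0; rewrite ?scale0r ?addr0.
have line_x' : axis_line x i (x + (a - b) *: e i) by exists (a - b).
have [|Zs _] := ocZ x i x _ (conj Zx line_x) (conj Zx' line_x') ((s - a) / (b - a)).
  by rewrite divr_ge0 ?ler_pdivrMr //=; lra.
move: Zs; congr Z; apply/rowP=> j; rewrite !mxE.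
by field; lra.
Qed.

Lemma prism_shift (Z : set V) i s t :
  mink_sum Z (axis_segment i s (s + t)) = mink_sum (prism Z i t) [set s *: e i].
Proof.
apply/seteqP; split=> z.
  case=> x [_ [Zx [[r /andP[r1 r2] <-] ->]]]; apply/mink_sum_set1P.
  exists x, ((r - s) *: e i); do !split=> //; last by rewrite scalerBl addrA.
  by exists (r - s) => //=; apply/andP; split; lra.
move/mink_sum_set1P => [x [_ [Zx [[r /andP[r1 r2] <-] zs]]]].
exists x, ((r + s) *: e i); do !split=> //; last by rewrite scalerDl addrA -zs subrK.
by exists (r + s) => //=; apply/andP; split; lra.
Qed.

(* [thicken W u l] is [W] plus the cube [[0, u]] on the axes listed in [l]. *)
Fixpoint thicken (W : set V) (u : R) (l : seq 'I_n) : set V :=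
  if l is i :: l' then prism (thicken W u l') i u else W.

Lemma thicken_subset (W : set V) u l : 0 <= u -> W `<=` thicken W u l.
Proof.
move=> u0 w Ww; elim: l => //= i l IH.
exists w, 0; rewrite addr0; do !split=> //.
by exists 0; rewrite ?scale0r //= lexx u0.
Qed.

Lemma thicken_bound (W : set V) u l (z : V) : 0 <= u -> thicken W u l z ->
  exists2 w, W w & forall j, 0 <= (z - w) ord0 j <= u * (size l)%:R.
Proof.
move=> u0; elim: l z => [|i l IH] z /=.
  by move=> Wz; exists z => // j; rewrite subrr !mxE mulr0 lexx.
case=> z' [_ [/IH [w Ww z'w] [[r /andP[r0 ru] <-] ->]]].
exists w => // j; move: (z'w j); rewrite !mxE => /andP[? ?].
rewrite -[(size l).+1]addn1 natrD mulrDr mulr1.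
by case: (j == i); rewrite ?mulr1 ?mulr0; apply/andP; split; lra.
Qed.

Lemma thicken_of_offset (W : set V) u l (z w : V) : uniq l -> W w ->
  (forall j, 0 <= (z - w) ord0 j <= (if j \in l then u else 0)) -> thicken W u l z.
Proof.
elim: l z => [|i l IH] z /=.
  move=> _ Ww zw; suff -> : z = w by [].
  by apply/rowP=> j; move: (zw j); rewrite !mxE => ?; lra.
move=> /andP[il ul] Ww zw; pose r := (z - w) ord0 i.
exists (z - r *: e i), (r *: e i); rewrite subrK; do !split=> //.
  apply: IH ul Ww _ => j; move: (zw j); rewrite /r !mxE in_cons.
  have [->|ji] := eqVneq j i; first by rewrite (negbTE il) mulr1 => _; lra.
  by rewrite mulr0 subr0.
by exists r => //; move: (zw i); rewrite in_cons eqxx.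
Qed.

Definition close1 (W X : set V) : Prop :=
  forall w, W w -> exists2 x, X x & forall j, -1 <= (w - x) ord0 j <= 1.

Lemma close1_refl (X : set V) : close1 X X.
Proof. by move=> x Xx; exists x => // j; rewrite subrr mxE; lra. Qed.

(* The coordinates of [prism (thicken W u l) i 1] exceed those of a point of
   [W] by at most [u * size l + 1 <= n + 1], and [W] is within [1] of [X];
   hence the box [[-1, n + 2]^n]. *)
Definition enlarge (X : set V) : set V :=
  mink_sum X (box (const_mx (-1)) (const_mx n.+2%:R)).

Lemma compact_interval_enlarge_box :
  compact_interval (box (const_mx (-1)) (const_mx n.+2%:R)).
Proof. by apply: compact_interval_box => j; rewrite !mxE; have := ler0n R n.+2; lra. Qed.

Lemma prism_thicken_sub_enlarge (X W : set V) u l i : close1 W X -> 0 <= u <= 1 ->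
  (size l <= n)%N -> prism (thicken W u l) i 1 `<=` enlarge X.
Proof.
move=> WX /andP[u0 u1] ln z.
case=> z' [_ [/(thicken_bound u0) [w Ww z'w] [[r /andP[r0 r1] <-] ->]]].
have [x Xx wx] := WX _ Ww.
exists x, (z' + r *: e i - x); split=> //; split; last by rewrite addrCA subrr addr0.
have ul : u * (size l)%:R <= n%:R.
  by rewrite -[n%:R]mul1r ler_pM ?ler_nat.
move=> j; move: (z'w j) (wx j); rewrite !mxE.
by case: (j == i); rewrite ?mulr1 ?mulr0 => /andP[? ?] /andP[? ?];
  rewrite -[n.+2]addn2 natrD; apply/andP; split; lra.
Qed.

Lemma sscale_l1_ball_coord (d : R) (v : V) :
  0 <= d -> sscale d (@l1_ball R n) v -> forall j, `|v ord0 j| <= d.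
Proof.
move=> d0 [b /= b1 <-] j; rewrite mxE normrM ger0_norm //.
rewrite -[leRHS]mulr1 ler_wpM2l //; apply: le_trans b1.
by rewrite (bigD1 j) //= lerDl sumr_ge0.
Qed.

Lemma close1_of_subset (X Y : set V) d : 0 <= d <= 1 ->
  Y `<=` mink_sum X (sscale d (@l1_ball R n)) -> close1 Y X.
Proof.
move=> /andP[d0 d1] YX y /YX [x [v [Xx [dv ->]]]]; exists x => // j.
by have := sscale_l1_ball_coord d0 dv j; rewrite addrC addKr ler_norml; lra.
Qed.

(* Shifting by the centre of the cube [[0, u]^n] turns the [u/2]-neighbourhood
   of [W] into a subset of [W + [0, u]^n]. *)
Lemma mink_sum_sub_thicken (W W' : set V) u d : 0 <= d <= u / 2 ->
  W' `<=` mink_sum W (sscale d (@l1_ball R n)) ->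
  mink_sum W' [set const_mx (u / 2)] `<=` thicken W u (enum 'I_n).
Proof.
move=> /andP[d0 du] W'W z /mink_sum_set1P /W'W [w [v [Ww [dv zE]]]].
apply: (thicken_of_offset (enum_uniq _) Ww) => j; rewrite mem_enum inE.
have := sscale_l1_ball_coord d0 dv j; rewrite ler_norml.
have -> : (z - w) ord0 j = v ord0 j + u / 2.
  by move/rowP/(_ j): zE; rewrite !mxE => ?; lra.
by move=> /andP[? ?]; apply/andP; split; lra.
Qed.

Lemma hausdorff_dist_ltP (X Y : set V) d : (hausdorff_dist X Y < d%:E)%E ->
  exists d', [/\ 0 < d', d' < d, X `<=` mink_sum Y (sscale d' (@l1_ball R n))
               & Y `<=` mink_sum X (sscale d' (@l1_ball R n))].
Proof.
by move/ereal_inf_lt => [_ [d' [d'0 [XY YX]] <-]]; rewrite lte_fin => d'd; exists d'.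
Qed.

End Geometry.

Section IncreasingValuation.
Variables (R : realType) (n : nat) (K : set (set 'rV[R]_n)).
Local Notation V := 'rV[R]_n.
Local Notation e := (@unitv R n).
Hypothesis orth_convexK : forall X, K X -> orth_convex X.
Hypothesis K_set1 : forall x : V, K [set x].
Hypothesis K_mink_interval :
  forall X I, K X -> compact_interval I -> K (mink_sum X I).
Variable phi : set V -> R.
Hypothesis phi_valuation : is_valuation K phi.
Hypothesis phi_increasing : increasing_on K phi.
Hypothesis phi_translation : translation_invariant K phi.

Lemma K_prism Z i r : K Z -> 0 <= r -> K (prism Z i r).
Proof. by move=> KZ r0; apply: K_mink_interval KZ (compact_interval_axis_segment _ r0). Qed.

Lemma K_thicken (W : set V) u l : K W -> 0 <= u -> K (thicken W u l).
Proof. by move=> KW u0; elim: l => //= i l IH; apply: K_prism. Qed.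

Lemma phi_prismD Z i s t : K Z -> 0 <= s -> 0 <= t ->
  phi (prism Z i (s + t)) - phi Z
  = (phi (prism Z i s) - phi Z) + (phi (prism Z i t) - phi Z).
Proof.
move=> KZ s0 t0.
have st0 : 0 <= s + t by lra.
have Kst : K (mink_sum Z (axis_segment i s (s + t))).
  by apply: K_mink_interval KZ (compact_interval_axis_segment _ _); lra.
have Ks : K (mink_sum Z [set s *: e i]).
  exact: K_mink_interval KZ (compact_interval_set1 _).
have := phi_valuation.2 _ _ (K_prism i KZ s0) Kst.
rewrite prismU // (prismI i (orth_convexK KZ) s0 t0) => /(_ (K_prism i KZ st0) Ks) ->.
rewrite phi_translation // prism_shift phi_translation; first by lra.
exact: K_prism.
Qed.

Lemma phi_prism_natmul Z i u k : K Z -> 0 <= u ->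
  phi (prism Z i (k.+1%:R * u)) - phi Z = k.+1%:R * (phi (prism Z i u) - phi Z).
Proof.
move=> KZ u0; elim: k => [|k IH]; first by rewrite !mul1r.
by rewrite [k.+2%:R]mulrSr !mulrDl !mul1r phi_prismD ?mulr_ge0 // IH.
Qed.

Lemma phi_set1_le Z z : K Z -> Z z -> phi [set 0] <= phi Z.
Proof.
move=> KZ Zz; have <- : phi [set z] = phi [set 0].
  rewrite -(phi_translation z (K_set1 0)); congr phi.
  apply/seteqP; split=> y.
    by move=> /= ->; apply/mink_sum_set1P; rewrite /= subrr.
  by move/mink_sum_set1P => /= /eqP; rewrite subr_eq0 => /eqP.
by apply: phi_increasing => // y /= ->.
Qed.

Lemma K_enlarge X : K X -> K (enlarge X).
Proof. by move=> KX; apply: K_mink_interval KX (compact_interval_enlarge_box _ _). Qed.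

(* Additivity in the length of the segment makes the increment of [phi] along
   a segment of length [1/m] exactly [1/m] of the increment along a unit
   segment, and the latter is bounded by monotonicity. *)
Lemma phi_thicken_step X W w l i m : K X -> K W -> close1 W X -> W w ->
  (size l <= n)%N -> (0 < m)%N ->
  phi (thicken W m%:R^-1 (i :: l)) - phi (thicken W m%:R^-1 l)
  <= (phi (enlarge X) - phi [set 0]) / m%:R.
Proof.
move=> KX KW WX Ww ln m0.
have m_gt0 : 0 < m%:R :> R by rewrite ltr0n.
have u0 : 0 <= m%:R^-1 :> R by rewrite invr_ge0 ltW.
have u1 : m%:R^-1 <= 1 :> R by rewrite invf_le1 // ler1n.
set Z := thicken W m%:R^-1 l.
have KZ : K Z by apply: K_thicken.
have := phi_prism_natmul i m.-1 KZ u0.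
rewrite prednK // mulfV ?gt_eqF // => prism_unit.
rewrite /= ler_pdivlMr // mulrC -prism_unit.
have : phi [set 0] <= phi Z.
  by apply: (phi_set1_le (z := w) KZ); apply: thicken_subset.
have : phi (prism Z i 1) <= phi (enlarge X).
  apply: phi_increasing; [exact: K_prism | exact: K_enlarge |].
  by apply: prism_thicken_sub_enlarge; rewrite ?u0.
lra.
Qed.

Lemma phi_thicken_le X W w l m : K X -> K W -> close1 W X -> W w ->
  (size l <= n)%N -> (0 < m)%N ->
  phi (thicken W m%:R^-1 l)
  <= phi W + (size l)%:R * ((phi (enlarge X) - phi [set 0]) / m%:R).
Proof.
move=> KX KW WX Ww + m0; elim: l => [|i l IH] ln; first by rewrite mul0r addr0.
have := phi_thicken_step i KX KW WX Ww (ltnW ln) m0; have := IH (ltnW ln).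
rewrite [(size (i :: l))%:R]mulrSr [(_ + 1) * _]mulrDl mul1r; lra.
Qed.

Lemma phi_le_of_close1 X W W' w m d : K X -> K W -> K W' -> close1 W X ->
  W w -> (0 < m)%N -> 0 <= d <= m%:R^-1 / 2 ->
  W' `<=` mink_sum W (sscale d (@l1_ball R n)) ->
  phi W' <= phi W + n%:R * (phi (enlarge X) - phi [set 0]) / m%:R.
Proof.
move=> KX KW KW' WX Ww m0 dm W'W.
have u0 : 0 <= m%:R^-1 :> R by rewrite invr_ge0 ler0n.
rewrite -(phi_translation (const_mx (m%:R^-1 / 2)) KW').
apply: (@le_trans _ _ (phi (thicken W m%:R^-1 (enum 'I_n)))).
  apply: phi_increasing; last exact: mink_sum_sub_thicken dm W'W.
    exact: K_mink_interval KW' (compact_interval_set1 _).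
  exact: K_thicken.
have := phi_thicken_le (l := enum 'I_n) KX KW WX Ww _ m0.
by rewrite size_enum_ord mulrA; apply.
Qed.

Lemma hausdorff_continuous_increasing : hausdorff_continuous K phi.
Proof.
move=> X KX eps eps0.
have [[x Xx]|X0] := pselect (exists x, X x); last first.
  exists 1 => // Y KY /hausdorff_dist_ltP [d [_ _ _ YX]].
  suff -> : Y = X by rewrite subrr normr0.
  apply/seteqP; split=> y; last by move=> Xy; case: X0; exists y.
  by move=> /YX [x [_ [Xx _]]]; case: X0; exists x.
pose C := n%:R * (phi (enlarge X) - phi [set 0]).
pose m := (Num.truncn (C / eps)).+1.
have m_gt0 : 0 < m%:R :> R by rewrite ltr0n.
have Cm : C / m%:R < eps by rewrite ltr_pdivrMr // mulrC -ltr_pdivrMr // truncnS_gt.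
exists (m%:R^-1 / 2); first by rewrite divr_gt0 // invr_gt0.
move=> Y KY /hausdorff_dist_ltP [d [d0 dm XY YX]].
have u1 : m%:R^-1 <= 1 :> R by rewrite invf_le1 // ler1n.
have dm' : 0 <= d <= m%:R^-1 / 2 by apply/andP; split; lra.
have d1 : 0 <= d <= 1 by apply/andP; split; lra.
have [y Yy] : exists y, Y y by case: (XY _ Xx) => y [_ [Yy _]]; exists y.
have := phi_le_of_close1 KX KY KX (close1_of_subset d1 YX) Yy (ltn0Sn _) dm' XY.
have := phi_le_of_close1 KX KX KY (close1_refl (X := X)) Xx (ltn0Sn _) dm' YX.
rewrite -/C -/m ltr_norml => ? ?; apply/andP; split; lra.
Qed.

End IncreasingValuation.

Section Negation.
Variables (R : realType) (n : nat) (K : set (set 'rV[R]_n)) (phi : set 'rV[R]_n -> R).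

Lemma is_valuationN : is_valuation K phi -> is_valuation K (fun X => - phi X).
Proof.
move=> [phi0 phiU]; split=> [/phi0 ->|X Y KX KY KU KI]; first by rewrite oppr0.
by rewrite phiU //; ring.
Qed.

Lemma translation_invariantN :
  translation_invariant K phi -> translation_invariant K (fun X => - phi X).
Proof. by move=> phi_tr X a KX; rewrite phi_tr. Qed.

Lemma hausdorff_continuousN :
  hausdorff_continuous K (fun X => - phi X) -> hausdorff_continuous K phi.
Proof.
move=> contN X KX eps eps0; have [d d0 hd] := contN X KX eps eps0.
by exists d => // Y KY XY; move: (hd Y KY XY); rewrite -opprD normrN.
Qed.

End Negation.

Theorem theorem4p2 (R : realType) (n : nat) (K : set (set 'rV[R]_n))
  (hK : forall X, K X -> compact X /\ orth_convex X)
  (hsing : forall x : 'rV[R]_n, K [set x])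
  (hsum : forall X I, K X -> compact_interval I -> K (mink_sum X I)) :
  forall phi : set 'rV[R]_n -> R,
    is_valuation K phi -> monotone_on K phi -> translation_invariant K phi ->
    hausdorff_continuous K phi.
Proof.
have orth_convexK X : K X -> orth_convex X by case/hK.
move=> phi phi_val [phi_inc|phi_dec] phi_tr.
  exact (hausdorff_continuous_increasing orth_convexK hsing hsum phi_val phi_inc phi_tr).
apply: hausdorff_continuousN.
exact (hausdorff_continuous_increasing orth_convexK hsing hsum
  (is_valuationN phi_val) phi_dec (translation_invariantN phi_tr)).
Qed.
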